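(* Assume $0<\inf_n a_n\le\sup_n a_n<\infty$. Let $x_0\in\mathbb{R}$ be such that the Lyapunov exponent $\gamma(x_0)=\lim_{n\to\infty}\frac1n\log\|T_n(x_0)\|$ exists and $\gamma(x_0)>0$. Then either $x_0$ is a pure point of $\rho$ (i.e. $\rho(\{x_0\})>0$), or else $\displaystyle \frac{p_n(x_0)^2}{K_n(x_0,x_0)}$ does not tend to $0$ (equivalently, by the paper's Theorem 2.2, $\rho$ fails the Nevai condition at $x_0$).
   Context: Let $\rho$ be a probability measure on $\mathbb{R}$ with compact but infinite support, $p_n$ ($n\ge0$) its orthonormal polynomials (real coefficients, positive leading coefficient, $p_0=1$), and $\{a_n,b_n\}_{n\ge1}$ ($a_n>0$) its Jacobi parameters, defined by $xp_n(x)=a_{n+1}p_{n+1}(x)+b_{n+1}p_n(x)+a_np_{n-1}(x)$, $p_{-1}=0$. $K_n(x,y)=\sum_{j=0}^n p_j(x)p_j(y)$. The transfer matrices are $T_n(x_0)=A_n(x_0)\cdots A_1(x_0)$ with $A_j(x_0)=\frac{1}{a_j}\begin{pmatrix}x_0-b_j&-1\\ a_j^2&0\end{pmatrix}$, so that $\binom{p_n(x_0)}{a_np_{n-1}(x_0)}=T_n(x_0)\binom10$. The Nevai condition at $x_0$ means $K_n(x,x_0)^2\,d\rho(x)/K_n(x_0,x_0)\to\delta_{x_0}$ weakly. *)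

From Stdlib Require Import Reals Lra List.
Open Scope R_scope.

(** A (Borel) probability measure rho on R is encoded by its distribution
    function F(x) = rho((-oo, x]) : nondecreasing, right-continuous,
    F -> 0 at -oo, F -> 1 at +oo.  Compact support is encoded by
    F a = 0 and F b = 1 for some a < b (so supp rho is contained in (a,b]). *)

Definition nondecreasing (F : R -> R) : Prop := forall x y, x <= y -> F x <= F y.

Definition right_continuous (F : R -> R) : Prop :=
  forall x eps, 0 < eps -> exists delta, 0 < delta /\
    forall y, x <= y < x + delta -> Rabs (F y - F x) < eps.

Definition compact_prob_distr (F : R -> R) (a b : R) : Prop :=
  a < b /\ nondecreasing F /\ right_continuous F /\ F a = 0 /\ F b = 1.

Definition in_support (F : R -> R) (x : R) : Prop :=
  forall eps, 0 < eps -> F (x - eps) < F (x + eps).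

Definition infinite_support (F : R -> R) : Prop :=
  forall l : list R, exists x, in_support F x /\ ~ In x l.

(** rho({x0}) > 0 : rho({x0}) = inf_{x < x0} rho((x, x0]) = inf_{x<x0} (F x0 - F x). *)
Definition pure_point (F : R -> R) (x0 : R) : Prop :=
  exists c, 0 < c /\ forall x, x < x0 -> c <= F x0 - F x.

(** For rho supported in (a,b] (F a = 0, F b = 1) and continuous f, the
    integral of f d rho is the limit of the Stieltjes sums over the uniform
    partitions of [a,b] with right-endpoint tags. *)
Fixpoint sum_1_to (g : nat -> R) (N : nat) : R :=
  match N with
  | O => 0
  | S k => sum_1_to g k + g (S k)
  end.

Definition grid (a b : R) (N i : nat) : R := a + INR i * (b - a) / INR N.

Definition stieltjes_sum (F : R -> R) (a b : R) (f : R -> R) (N : nat) : R :=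
  sum_1_to (fun i => f (grid a b N i) * (F (grid a b N i) - F (grid a b N (pred i)))) N.

Definition integral_is (F : R -> R) (a b : R) (f : R -> R) (I : R) : Prop :=
  Un_cv (stieltjes_sum F a b f) I.

(** * Orthonormal polynomials.
    c n k is the coefficient of x^k in p_n (real coefficients). *)
Definition poly_eval (c : nat -> nat -> R) (n : nat) (x : R) : R :=
  sum_f_R0 (fun k => c n k * x ^ k) n.

Definition orthonormal_polys (F : R -> R) (a b : R) (c : nat -> nat -> R) : Prop :=
  (forall n k, (n < k)%nat -> c n k = 0) /\
  (forall n, 0 < c n n) /\
  (forall x, poly_eval c 0 x = 1) /\
  (forall n m, integral_is F a b (fun x => poly_eval c n x * poly_eval c m x)
                 (if Nat.eqb n m then 1 else 0)).

(** Jacobi parameters {a_n, b_n}_{n>=1}, a_n > 0 :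
    x p_n = a_{n+1} p_{n+1} + b_{n+1} p_n + a_n p_{n-1}, with p_{-1} = 0
    (so the value ja 0 is irrelevant). *)
Definition jacobi_params (c : nat -> nat -> R) (ja jb : nat -> R) : Prop :=
  (forall n, (1 <= n)%nat -> 0 < ja n) /\
  (forall n x,
     x * poly_eval c n x =
       ja (S n) * poly_eval c (S n) x + jb (S n) * poly_eval c n x
       + (match n with O => 0 | S m => ja n * poly_eval c m x end)).

Definition CD_kernel (c : nat -> nat -> R) (n : nat) (x y : R) : R :=
  sum_f_R0 (fun j => poly_eval c j x * poly_eval c j y) n.

Record mat2 : Type := Mat2 { m11 : R; m12 : R; m21 : R; m22 : R }.

Definition mat2_mul (A B : mat2) : mat2 :=
  Mat2 (m11 A * m11 B + m12 A * m21 B) (m11 A * m12 B + m12 A * m22 B)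
       (m21 A * m11 B + m22 A * m21 B) (m21 A * m12 B + m22 A * m22 B).

Definition mat2_id : mat2 := Mat2 1 0 0 1.

Definition A_mat (ja jb : nat -> R) (j : nat) (x0 : R) : mat2 :=
  Mat2 ((x0 - jb j) / ja j) (- 1 / ja j) (ja j ^ 2 / ja j) 0.

Fixpoint transfer (ja jb : nat -> R) (n : nat) (x0 : R) : mat2 :=
  match n with
  | O => mat2_id
  | S k => mat2_mul (A_mat ja jb (S k) x0) (transfer ja jb k x0)
  end.

Definition opnorm_is (M : mat2) (r : R) : Prop :=
  is_lub (fun t => exists v1 v2, v1 ^ 2 + v2 ^ 2 = 1 /\
            t = sqrt ((m11 M * v1 + m12 M * v2) ^ 2 + (m21 M * v1 + m22 M * v2) ^ 2)) r.

Definition lyapunov_exponent_is (ja jb : nat -> R) (x0 g : R) : Prop :=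
  exists nrm : nat -> R,
    (forall n, opnorm_is (transfer ja jb n x0) (nrm n)) /\
    Un_cv (fun n => ln (nrm n) / INR n) g.

From Stdlib Require Import Reals List.
From Stdlib Require Import Lra Lia Psatz Classical.
Open Scope R_scope.

(** Proof of Corollary 3.3.  Suppose p_n(x0)^2 / K_n(x0,x0) -> 0; we show x0 is an atom.

    - Growth.  The first column of T_n(x0) is (p_n(x0), a_n p_{n-1}(x0)), so its squared
      length is O(K_n(x0,x0)), and the vanishing ratio makes K_n grow slower than any
      exponential.  Since gamma(x0) > 0, ||T_n(x0)|| grows like e^{n gamma}; as det T_n = 1,
      the second column carries this growth.
    - Decay.  For an SL(2,R) cocycle with bounded steps, the coefficient of the projection
      of the first column onto the second converges geometrically fast; it must converge
      to 0, and the Lagrange identity then forces p_n(x0) to decay exponentially.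
    - Localization.  Exponential decay makes K_n(x0,x0) bounded and the Christoffel–Darboux
      boundary terms a_{n+1}^2 (p_n(x0)^2 + p_{n+1}(x0)^2) small.  Integrating a pointwise
      majorant of K_n(t,x0) against rho, and using the reproducing identities of the kernel,
      shows that every interval around x0 carries mass >= 1 / (2 sup_n K_n(x0,x0)). *)

(** * Limits of real sequences *)

Lemma cv_const (l : R) : Un_cv (fun _ => l) l.
Proof. intros e He; exists 0%nat; intros; unfold Rdist; rewrite Rminus_diag, Rabs_R0; lra. Qed.

Lemma cv_scal (u : nat -> R) (l k : R) : Un_cv u l -> Un_cv (fun n => k * u n) (k * l).
Proof. intros Hu; apply (CV_mult (fun _ => k) u); auto using cv_const. Qed.

Lemma cv_le_eventually (u v : nat -> R) (l1 l2 : R) (N : nat) :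
  (forall n, (n >= N)%nat -> u n <= v n) -> Un_cv u l1 -> Un_cv v l2 -> l1 <= l2.
Proof.
  intros H Hu Hv. destruct (Rle_or_lt l1 l2) as [|Hlt]; auto.
  destruct (Hu ((l1 - l2) / 2)) as [N1 H1]; [lra|].
  destruct (Hv ((l1 - l2) / 2)) as [N2 H2]; [lra|].
  set (n := (N + N1 + N2)%nat).
  specialize (H1 n ltac:(unfold n; lia)); specialize (H2 n ltac:(unfold n; lia)).
  specialize (H n ltac:(unfold n; lia)). unfold Rdist in *.
  apply Rabs_def2 in H1; apply Rabs_def2 in H2; lra.
Qed.

Lemma cv_0_of_sq_geometric (u : nat -> R) (C q : R) (N : nat) :
  0 <= C -> 0 < q < 1 -> (forall n, (n >= N)%nat -> u n ^ 2 <= C * q ^ n) -> Un_cv u 0.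
Proof.
  intros HC Hq Hu eps He.
  destruct (pow_lt_1_zero q ltac:(rewrite Rabs_right; lra)
     (eps * eps / (C + 1)) ltac:(apply Rdiv_lt_0_compat; nra)) as [M HM].
  exists (max M N). intros n Hn. specialize (HM n ltac:(lia)). specialize (Hu n ltac:(lia)).
  assert (Hqn : 0 < q ^ n) by (apply pow_lt; lra).
  rewrite Rabs_right in HM by lra.
  assert (Hsq : u n * u n < eps * eps).
  { apply Rmult_lt_reg_r with (/ (C + 1)); [apply Rinv_0_lt_compat; lra|].
    unfold Rdiv in HM. apply Rle_lt_trans with (q ^ n); [|lra].
    apply Rmult_le_reg_r with (C + 1); [lra|].
    replace (u n * u n * / (C + 1) * (C + 1)) with (u n ^ 2) by (field; lra). nra. }
  unfold Rdist. rewrite Rminus_0_r.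
  destruct (Rle_or_lt eps (Rabs (u n))) as [Hge|]; auto.
  assert (eps * eps <= Rabs (u n) * Rabs (u n)) by nra.
  rewrite <- Rabs_mult, Rabs_right in H by nra. lra.
Qed.

(** * Stieltjes sums and the integral against rho *)

Lemma sum_1_to_ext (f g : nat -> R) (N : nat) :
  (forall i, f i = g i) -> sum_1_to f N = sum_1_to g N.
Proof. intros H; induction N; simpl; auto. rewrite IHN, H; auto. Qed.

Lemma sum_1_to_plus (f g : nat -> R) (N : nat) :
  sum_1_to (fun i => f i + g i) N = sum_1_to f N + sum_1_to g N.
Proof. induction N; simpl; [lra|]. rewrite IHN; lra. Qed.

Lemma sum_1_to_scal (f : nat -> R) (k : R) (N : nat) :
  sum_1_to (fun i => k * f i) N = k * sum_1_to f N.
Proof. induction N; simpl; [lra|]. rewrite IHN; lra. Qed.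

Lemma sum_1_to_le (f g : nat -> R) (N : nat) :
  (forall i, (1 <= i <= N)%nat -> f i <= g i) -> sum_1_to f N <= sum_1_to g N.
Proof.
  intros H; induction N; simpl; [lra|].
  apply Rplus_le_compat; [apply IHN; intros; apply H; lia | apply H; lia].
Qed.

Lemma sum_1_to_telescope (G : nat -> R) (N : nat) :
  sum_1_to (fun i => G i - G (pred i)) N = G N - G 0%nat.
Proof. induction N; simpl; [ring|]. rewrite IHN. ring. Qed.

Section Stieltjes.
Variables (F : R -> R) (a b : R).

Lemma stieltjes_sum_ext (f g : R -> R) (N : nat) :
  (forall x, f x = g x) -> stieltjes_sum F a b f N = stieltjes_sum F a b g N.
Proof. intros H; unfold stieltjes_sum; apply sum_1_to_ext; intros; rewrite H; auto. Qed.

Lemma stieltjes_sum_plus (f g : R -> R) (N : nat) :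
  stieltjes_sum F a b (fun x => f x + g x) N
  = stieltjes_sum F a b f N + stieltjes_sum F a b g N.
Proof. unfold stieltjes_sum; rewrite <- sum_1_to_plus; apply sum_1_to_ext; intros; ring. Qed.

Lemma stieltjes_sum_scal (f : R -> R) (k : R) (N : nat) :
  stieltjes_sum F a b (fun x => k * f x) N = k * stieltjes_sum F a b f N.
Proof. unfold stieltjes_sum; rewrite <- sum_1_to_scal; apply sum_1_to_ext; intros; ring. Qed.

Lemma integral_ext (f g : R -> R) (l : R) :
  (forall x, f x = g x) -> integral_is F a b f l -> integral_is F a b g l.
Proof.
  intros H Hf; unfold integral_is.
  apply Un_cv_ext with (stieltjes_sum F a b f); auto using stieltjes_sum_ext.
Qed.

Lemma integral_plus (f g : R -> R) (l1 l2 : R) :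
  integral_is F a b f l1 -> integral_is F a b g l2 ->
  integral_is F a b (fun x => f x + g x) (l1 + l2).
Proof.
  intros Hf Hg; unfold integral_is.
  apply Un_cv_ext with (fun N => stieltjes_sum F a b f N + stieltjes_sum F a b g N).
  - intros; symmetry; apply stieltjes_sum_plus.
  - apply CV_plus; auto.
Qed.

Lemma integral_scal (f : R -> R) (k l : R) :
  integral_is F a b f l -> integral_is F a b (fun x => k * f x) (k * l).
Proof.
  intros Hf; unfold integral_is.
  apply Un_cv_ext with (fun N => k * stieltjes_sum F a b f N).
  - intros; symmetry; apply stieltjes_sum_scal.
  - apply cv_scal; auto.
Qed.

Lemma integral_value (f : R -> R) (l l' : R) :
  integral_is F a b f l -> l = l' -> integral_is F a b f l'.
Proof. intros; subst; auto. Qed.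

Lemma integral_sum (h : nat -> R -> R) (l : nat -> R) (n : nat) :
  (forall j, (j <= n)%nat -> integral_is F a b (h j) (l j)) ->
  integral_is F a b (fun x => sum_f_R0 (fun j => h j x) n) (sum_f_R0 l n).
Proof.
  induction n; intros H; simpl.
  - apply H; lia.
  - apply integral_plus; [apply IHn; intros; apply H; lia | apply H; lia].
Qed.

Hypothesis Hrho : compact_prob_distr F a b.

Lemma grid_in (N i : nat) : (1 <= i <= N)%nat ->
  a <= grid a b N i <= b /\ grid a b N (pred i) <= grid a b N i.
Proof.
  intros Hi. destruct Hrho as [Hab _]. unfold grid.
  assert (HN : 0 < INR N) by (apply lt_0_INR; lia).
  assert (Hi1 : INR i <= INR N) by (apply le_INR; lia).
  assert (Hi2 : INR (pred i) <= INR i) by (apply le_INR; lia).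
  assert (Hi0 : 0 <= INR (pred i)) by apply pos_INR.
  assert (INR i * (b - a) / INR N <= b - a).
  { apply Rmult_le_reg_r with (INR N); auto.
    replace (INR i * (b - a) / INR N * INR N) with (INR i * (b - a)) by (field; lra). nra. }
  assert (0 <= INR (pred i) * (b - a) / INR N) by (apply Rle_mult_inv_pos; nra).
  assert (INR (pred i) * (b - a) / INR N <= INR i * (b - a) / INR N).
  { unfold Rdiv. apply Rmult_le_compat_r; [left; apply Rinv_0_lt_compat; lra | nra]. }
  lra.
Qed.

Lemma stieltjes_sum_le (f g : R -> R) (N : nat) :
  (forall x, a <= x <= b -> f x <= g x) ->
  stieltjes_sum F a b f N <= stieltjes_sum F a b g N.
Proof.
  intros H. unfold stieltjes_sum. apply sum_1_to_le. intros i Hi.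
  destruct Hrho as [_ [Hmon _]]. destruct (grid_in N i Hi) as [H1 H2].
  apply Rmult_le_compat_r; [specialize (Hmon _ _ H2); lra | apply H; auto].
Qed.

Lemma stieltjes_sum_one (N : nat) : stieltjes_sum F a b (fun _ => 1) N <= 1.
Proof.
  destruct Hrho as [Hab [Hmon [_ [Fa Fb]]]]. unfold stieltjes_sum.
  rewrite (sum_1_to_ext _ (fun i => F (grid a b N i) - F (grid a b N (pred i)))) by (intros; ring).
  rewrite sum_1_to_telescope. destruct N; [simpl; lra|].
  replace (grid a b (S N) (S N)) with b by (unfold grid; field; apply not_0_INR; lia).
  replace (grid a b (S N) 0) with a by (unfold grid; simpl (INR 0); field; apply not_0_INR; lia).
  lra.
Qed.

End Stieltjes.


(** * Orthonormal polynomials, Jacobi parameters and the Christoffel–Darboux kernel *)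

Lemma sum_delta (u : nat -> R) (i n : nat) : (i <= n)%nat ->
  sum_f_R0 (fun j => u j * (if Nat.eqb j i then 1 else 0)) n = u i.
Proof.
  induction n; intros Hi.
  - assert (i = 0%nat) by lia; subst; simpl; ring.
  - cbn [sum_f_R0]. destruct (Nat.eq_dec i (S n)) as [->|Hne].
    + rewrite Nat.eqb_refl, sum_eq_R0; [ring|].
      intros j Hj. rewrite (proj2 (Nat.eqb_neq j (S n))) by lia; ring.
    + rewrite IHn by lia. rewrite (proj2 (Nat.eqb_neq (S n) i)) by lia; ring.
Qed.

Section Orthonormal.
Variables (F : R -> R) (a b : R) (c : nat -> nat -> R) (ja jb : nat -> R).
Hypothesis Hp : orthonormal_polys F a b c.
Hypothesis Hjac : jacobi_params c ja jb.
Notation p := (poly_eval c).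

Lemma p_zero (x : R) : p 0 x = 1.
Proof. destruct Hp as [_ [_ [H _]]]; auto. Qed.

Lemma orth (n m : nat) :
  integral_is F a b (fun x => p n x * p m x) (if Nat.eqb n m then 1 else 0).
Proof. destruct Hp as [_ [_ [_ H]]]; auto. Qed.

Lemma orth_eq (n : nat) : integral_is F a b (fun x => p n x * p n x) 1.
Proof. generalize (orth n n); rewrite Nat.eqb_refl; auto. Qed.

Lemma orth_neq (n m : nat) : n <> m -> integral_is F a b (fun x => p n x * p m x) 0.
Proof. intros H; generalize (orth n m); rewrite (proj2 (Nat.eqb_neq n m) H); auto. Qed.

Lemma three_term (n : nat) (x : R) :
  x * p n x = ja (S n) * p (S n) x + jb (S n) * p n x
              + (match n with O => 0 | S m => ja n * p m x end).
Proof. destruct Hjac as [_ H]; auto. Qed.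

Lemma integral_x_p_sq (n : nat) : integral_is F a b (fun x => x * p n x * p n x) (jb (S n)).
Proof.
  apply integral_ext with (fun x => (ja (S n) * (p (S n) x * p n x) + jb (S n) * (p n x * p n x))
     + (match n with O => 0 | S m => ja n * (p m x * p n x) end)).
  { intros x. rewrite (three_term n x). destruct n; ring. }
  apply integral_value with ((ja (S n) * 0 + jb (S n) * 1) + 0); [|ring].
  apply integral_plus; [apply integral_plus; apply integral_scal|].
  - apply orth_neq; lia.
  - apply orth_eq.
  - destruct n.
    + apply integral_ext with (fun x => 0 * (p 0 x * p 0 x)); [intros; ring|].
      apply integral_value with (0 * 1); [apply integral_scal, orth_eq | ring].
    + apply integral_value with (ja (S n) * 0); [apply integral_scal, orth_neq; lia | ring].
Qed.

Lemma christoffel_darboux (n : nat) (t y : R) :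
  (t - y) * CD_kernel c n t y = ja (S n) * (p (S n) t * p n y - p n t * p (S n) y).
Proof.
  induction n; unfold CD_kernel in *; cbn [sum_f_R0].
  - rewrite !p_zero. pose proof (three_term 0 t) as H1; pose proof (three_term 0 y) as H2.
    rewrite p_zero in H1, H2. lra.
  - pose proof (three_term (S n) t) as H1; pose proof (three_term (S n) y) as H2.
    replace ((t - y) * (sum_f_R0 (fun j => p j t * p j y) n + p (S n) t * p (S n) y))
      with ((t - y) * sum_f_R0 (fun j => p j t * p j y) n + (t * p (S n) t) * p (S n) y
             - p (S n) t * (y * p (S n) y)) by ring.
    rewrite IHn, H1, H2. ring.
Qed.

Lemma integral_kernel (n : nat) (y : R) : integral_is F a b (fun t => CD_kernel c n t y) 1.
Proof.
  unfold CD_kernel.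
  apply integral_ext with (fun t => sum_f_R0 (fun j => p j y * (p j t * p 0 t)) n).
  { intros t. rewrite p_zero. apply sum_eq; intros; ring. }
  apply integral_value with (sum_f_R0 (fun j => p j y * (if Nat.eqb j 0 then 1 else 0)) n).
  - apply integral_sum. intros j _. apply integral_scal, orth.
  - rewrite sum_delta by lia. apply p_zero.
Qed.

Lemma integral_kernel_sq (n : nat) (y : R) :
  integral_is F a b (fun t => CD_kernel c n t y * CD_kernel c n t y) (CD_kernel c n y y).
Proof.
  unfold CD_kernel at 3.
  apply integral_ext
    with (fun t => sum_f_R0 (fun i => p i y * sum_f_R0 (fun j => p j y * (p j t * p i t)) n) n).
  { intros t. unfold CD_kernel. rewrite scal_sum.
    apply sum_eq; intros i _. rewrite scal_sum, scal_sum. apply sum_eq; intros; ring. }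
  apply integral_sum. intros i Hi.
  apply integral_value with (p i y * sum_f_R0 (fun j => p j y * (if Nat.eqb j i then 1 else 0)) n).
  - apply integral_scal, integral_sum. intros j _. apply integral_scal, orth.
  - rewrite sum_delta by lia. ring.
Qed.

(** By Christoffel–Darboux, int ((t-y) K_n(t,y))^2 d rho = a_{n+1}^2 (p_n(y)^2 + p_{n+1}(y)^2). *)
Lemma integral_kernel_moment (n : nat) (y : R) :
  integral_is F a b (fun t => ((t - y) * CD_kernel c n t y) * ((t - y) * CD_kernel c n t y))
    (ja (S n) ^ 2 * (p n y ^ 2 + p (S n) y ^ 2)).
Proof.
  apply integral_ext with (fun t => (ja (S n) ^ 2 * p n y ^ 2) * (p (S n) t * p (S n) t)
     + (-2 * ja (S n) ^ 2 * p n y * p (S n) y) * (p (S n) t * p n t)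
     + (ja (S n) ^ 2 * p (S n) y ^ 2) * (p n t * p n t)).
  { intros t. rewrite christoffel_darboux. ring. }
  apply integral_value with ((ja (S n) ^ 2 * p n y ^ 2) * 1
     + (-2 * ja (S n) ^ 2 * p n y * p (S n) y) * 0 + (ja (S n) ^ 2 * p (S n) y ^ 2) * 1); [|ring].
  apply integral_plus; [apply integral_plus|]; apply integral_scal.
  - apply orth_eq.
  - apply orth_neq; lia.
  - apply orth_eq.
Qed.

Hypothesis Hrho : compact_prob_distr F a b.

(** b_{n+1} is an average of x over [a,b], hence lies in [a,b]. *)
Lemma jb_bounds (n : nat) : a <= jb (S n) <= b.
Proof.
  assert (Hsq : forall x, 0 <= p n x * p n x) by (intros; nra).
  assert (Hconst : forall k, integral_is F a b (fun x => k * (p n x * p n x)) k).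
  { intros k. apply integral_value with (k * 1); [apply integral_scal, orth_eq | ring]. }
  split.
  - apply (cv_le_eventually (stieltjes_sum F a b (fun x => a * (p n x * p n x)))
      (stieltjes_sum F a b (fun x => x * p n x * p n x)) _ _ 0%nat); [| apply Hconst | apply integral_x_p_sq].
    intros N _. apply stieltjes_sum_le; auto. intros x Hx. specialize (Hsq x). nra.
  - apply (cv_le_eventually (stieltjes_sum F a b (fun x => x * p n x * p n x))
      (stieltjes_sum F a b (fun x => b * (p n x * p n x))) _ _ 0%nat); [| apply integral_x_p_sq | apply Hconst].
    intros N _. apply stieltjes_sum_le; auto. intros x Hx. specialize (Hsq x). nra.
Qed.

End Orthonormal.

(** * Localization of the mass of rho near x0 *)

Definition chi (al be t : R) : R :=
  if Rlt_dec al t then (if Rle_dec t be then 1 else 0) else 0.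

Definition clamp (lo hi x : R) : R := Rmin (Rmax x lo) hi.

Lemma clamp_mono (lo hi x y : R) : x <= y -> clamp lo hi x <= clamp lo hi y.
Proof. intros; unfold clamp, Rmin, Rmax; repeat destruct Rle_dec; lra. Qed.

Lemma stieltjes_sum_window (F : R -> R) (a b al be : R) (N : nat) :
  compact_prob_distr F a b -> al < be -> (1 <= N)%nat ->
  stieltjes_sum F a b (chi al be) N <= F be - F (al - (b - a) / INR N).
Proof.
  intros [Hab [Hmon _]] Halbe HN.
  set (h := (b - a) / INR N). set (G := fun i => F (clamp (al - h) be (grid a b N i))).
  assert (HNpos : 0 < INR N) by (apply lt_0_INR; lia).
  assert (Hh : 0 < h) by (unfold h; apply Rdiv_lt_0_compat; lra).
  assert (Hstep : forall i, (1 <= i)%nat -> grid a b N i = grid a b N (pred i) + h).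
  { intros [|i] Hi; [lia|]. unfold grid, h; rewrite S_INR; simpl pred; field; lra. }
  apply Rle_trans with (sum_1_to (fun i => G i - G (pred i)) N).
  - apply sum_1_to_le. intros i Hi. specialize (Hstep i ltac:(lia)). unfold G.
    assert (Hle : grid a b N (pred i) <= grid a b N i) by lra.
    assert (Hcl := Hmon _ _ (clamp_mono (al - h) be _ _ Hle)).
    unfold chi; destruct (Rlt_dec al (grid a b N i)); [destruct (Rle_dec (grid a b N i) be)|].
    + replace (clamp (al - h) be (grid a b N i)) with (grid a b N i)
        by (unfold clamp, Rmin, Rmax; repeat destruct Rle_dec; lra).
      replace (clamp (al - h) be (grid a b N (pred i))) with (grid a b N (pred i))
        by (unfold clamp, Rmin, Rmax; repeat destruct Rle_dec; lra).
      lra.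
    + lra.
    + lra.
  - rewrite sum_1_to_telescope. unfold G.
    assert (F (clamp (al - h) be (grid a b N N)) <= F be) by (apply Hmon, Rmin_r).
    assert (F (al - h) <= F (clamp (al - h) be (grid a b N 0))).
    { apply Hmon. unfold clamp, Rmin, Rmax; repeat destruct Rle_dec; lra. }
    lra.
Qed.

Lemma amgm (y l : R) : 0 < l -> y <= l / 2 + / (2 * l) * (y * y).
Proof.
  intros Hl.
  assert (E : l / 2 + / (2 * l) * (y * y) - y = / (2 * l) * ((y - l) * (y - l))) by (field; lra).
  assert (0 <= / (2 * l) * ((y - l) * (y - l))).
  { apply Rmult_le_pos; [left; apply Rinv_0_lt_compat; lra | apply Rle_0_sqr]. }
  lra.
Qed.

(** Pointwise majorant of the kernel: near y use K <= lam/2 + K^2/(2 lam); away from y,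
    i.e. for |t - y| >= d, use d K <= |(t - y) K| and the AM-GM inequality. *)
Lemma kernel_pointwise (K t y d lam mu : R) : 0 < d -> 0 < lam -> 0 < mu ->
  K <= lam / 2 * chi (y - d) (y + d) t + / (2 * lam) * (K * K) + mu / (2 * d) * 1
       + / (2 * mu * d) * (((t - y) * K) * ((t - y) * K)).
Proof.
  intros Hd Hl Hm.
  assert (P1 : 0 <= / (2 * lam) * (K * K)).
  { apply Rmult_le_pos; [left; apply Rinv_0_lt_compat; lra | apply Rle_0_sqr]. }
  assert (P2 : 0 <= / (2 * mu * d) * (((t - y) * K) * ((t - y) * K))).
  { apply Rmult_le_pos; [left; apply Rinv_0_lt_compat; nra | apply Rle_0_sqr]. }
  assert (P3 : 0 < mu / (2 * d) * 1) by (rewrite Rmult_1_r; apply Rdiv_lt_0_compat; lra).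
  assert (Hfar : d <= Rabs (t - y) -> K <= mu / (2 * d) * 1 + / (2 * mu * d) * (((t - y) * K) * ((t - y) * K))).
  { intros Hdist. set (s := (t - y) * K).
    assert (H1 : d * K <= Rabs s).
    { unfold s; rewrite Rabs_mult. pose proof (RRle_abs K). pose proof (Rabs_pos K). nra. }
    assert (H2 : Rabs s <= mu / 2 + / (2 * mu) * (s * s)).
    { rewrite <- (Rabs_right (s * s)) by (apply Rle_ge, Rle_0_sqr).
      rewrite Rabs_mult. apply amgm; auto. }
    apply Rmult_le_reg_l with d; auto.
    replace (d * (mu / (2 * d) * 1 + / (2 * mu * d) * (s * s))) with (mu / 2 + / (2 * mu) * (s * s))
      by (field; lra).
    lra. }
  unfold chi. destruct (Rlt_dec (y - d) t); [destruct (Rle_dec t (y + d))|].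
  - pose proof (amgm K lam Hl). lra.
  - assert (d <= Rabs (t - y)) by (unfold Rabs; destruct Rcase_abs; lra). specialize (Hfar H). lra.
  - assert (d <= Rabs (t - y)) by (unfold Rabs; destruct Rcase_abs; lra). specialize (Hfar H). lra.
Qed.

(** Integrating the pointwise majorant of K_n(., y) against rho, and using the reproducing
    identities of the kernel, gives a lower bound on the mass of rho near y:
    1 <= lam/2 rho((y-2d, y+d]) + K_n(y,y)/(2 lam) + mu/(2d) + E_n/(2 mu d),
    where E_n = a_{n+1}^2 (p_n(y)^2 + p_{n+1}(y)^2). *)
Lemma kernel_localization (F : R -> R) (a b : R) (c : nat -> nat -> R) (ja jb : nat -> R)
  (n : nat) (y d lam mu : R) :
  compact_prob_distr F a b -> orthonormal_polys F a b c -> jacobi_params c ja jb ->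
  0 < d -> 0 < lam -> 0 < mu ->
  1 <= lam / 2 * (F (y + d) - F (y - 2 * d)) + / (2 * lam) * CD_kernel c n y y + mu / (2 * d) * 1
       + / (2 * mu * d) * (ja (S n) ^ 2 * (poly_eval c n y ^ 2 + poly_eval c (S n) y ^ 2)).
Proof.
  intros Hrho Hp Hjac Hd Hl Hm.
  pose proof Hrho as [Hab [Hmon _]].
  set (K := fun t => CD_kernel c n t y).
  set (W := fun t => ((t - y) * K t) * ((t - y) * K t)).
  set (v := fun N => lam / 2 * (F (y + d) - F (y - 2 * d)) + / (2 * lam) * stieltjes_sum F a b (fun t => K t * K t) N
                     + mu / (2 * d) * 1 + / (2 * mu * d) * stieltjes_sum F a b W N).
  destruct (INR_archimed d (b - a) Hd) as [N0 HN0].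
  apply (cv_le_eventually (stieltjes_sum F a b K) v _ _ (max N0 1)).
  - intros N HN.
    assert (HNpos : 0 < INR N) by (apply lt_0_INR; lia).
    assert (Hmesh : (b - a) / INR N <= d).
    { apply Rmult_le_reg_r with (INR N); auto. unfold Rdiv; rewrite Rmult_assoc, Rinv_l by lra.
      assert (INR N0 <= INR N) by (apply le_INR; lia). nra. }
    eapply Rle_trans.
    { apply (stieltjes_sum_le F a b Hrho K (fun t => lam / 2 * chi (y - d) (y + d) t
        + / (2 * lam) * (K t * K t) + mu / (2 * d) * 1 + / (2 * mu * d) * W t)).
      intros t _. apply kernel_pointwise; auto. }
    rewrite !stieltjes_sum_plus, !stieltjes_sum_scal. unfold v.
    assert (Hwin := stieltjes_sum_window F a b (y - d) (y + d) N Hrho ltac:(lra) ltac:(lia)).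
    assert (F (y - 2 * d) <= F (y - d - (b - a) / INR N)) by (apply Hmon; lra).
    assert (Hone := stieltjes_sum_one F a b Hrho N).
    assert (0 <= mu / (2 * d)) by (left; apply Rdiv_lt_0_compat; lra).
    apply Rplus_le_compat_r, Rplus_le_compat; [apply Rplus_le_compat_r|].
    + apply Rmult_le_compat_l; lra.
    + apply Rmult_le_compat_l; lra.
  - apply (integral_kernel F a b c Hp).
  - unfold v. apply CV_plus; [apply CV_plus; [apply CV_plus|]|].
    + apply cv_const.
    + apply cv_scal, (integral_kernel_sq F a b c Hp).
    + apply cv_const.
    + apply cv_scal, (integral_kernel_moment F a b c ja jb Hp Hjac).
Qed.

(** If every interval (x0 - 2d, x0 + d] carries mass >= c0 > 0, then x0 is an atom
    (F is right-continuous at x0). *)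
Lemma pure_point_of_uniform_mass (F : R -> R) (a b x0 c0 : R) :
  compact_prob_distr F a b -> 0 < c0 ->
  (forall d, 0 < d -> c0 <= F (x0 + d) - F (x0 - 2 * d)) -> pure_point F x0.
Proof.
  intros [_ [Hmon [Hrc _]]] Hc H.
  exists (c0 / 2); split; [lra|]. intros x Hx.
  destruct (Hrc x0 (c0 / 2) ltac:(lra)) as [d1 [Hd1 Hd1']].
  set (d := Rmin (d1 / 2) ((x0 - x) / 2)).
  assert (Hd : 0 < d) by (unfold d, Rmin; destruct Rle_dec; lra).
  assert (Hd2 : d <= d1 / 2) by apply Rmin_l.
  assert (Hd3 : d <= (x0 - x) / 2) by apply Rmin_r.
  specialize (Hd1' (x0 + d) ltac:(lra)). specialize (H d Hd).
  assert (F x <= F (x0 - 2 * d)) by (apply Hmon; lra).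
  apply Rabs_def2 in Hd1'. lra.
Qed.

Lemma pure_point_of_bounded_kernel (F : R -> R) (a b : R) (c : nat -> nat -> R) (ja jb : nat -> R)
  (x0 Kb : R) :
  compact_prob_distr F a b -> orthonormal_polys F a b c -> jacobi_params c ja jb ->
  (forall n, CD_kernel c n x0 x0 <= Kb) ->
  (forall eta, 0 < eta -> exists n,
     ja (S n) ^ 2 * (poly_eval c n x0 ^ 2 + poly_eval c (S n) x0 ^ 2) <= eta) ->
  pure_point F x0.
Proof.
  intros Hrho Hp Hjac HK Hsmall.
  assert (HKb : 0 < Kb).
  { specialize (HK 0%nat). unfold CD_kernel in HK; simpl in HK.
    rewrite (p_zero F a b c Hp) in HK. lra. }
  apply (pure_point_of_uniform_mass F a b x0 (1 / (2 * Kb)) Hrho); [apply Rdiv_lt_0_compat; lra|].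
  intros d Hd.
  destruct (Hsmall (d * d / 16)) as [n Hn]; [nra|].
  assert (Hloc := kernel_localization F a b c ja jb n x0 d (2 * Kb) (d / 4) Hrho Hp Hjac
                    Hd ltac:(lra) ltac:(lra)).
  assert (T1 : / (2 * (2 * Kb)) * CD_kernel c n x0 x0 <= 1 / 4).
  { apply Rmult_le_reg_l with (4 * Kb); [lra|].
    replace (4 * Kb * (/ (2 * (2 * Kb)) * CD_kernel c n x0 x0)) with (CD_kernel c n x0 x0)
      by (field; lra). specialize (HK n); lra. }
  assert (T2 : d / 4 / (2 * d) * 1 = 1 / 8) by (field; lra).
  assert (T3 : / (2 * (d / 4) * d) * (ja (S n) ^ 2 * (poly_eval c n x0 ^ 2 + poly_eval c (S n) x0 ^ 2))
               <= 1 / 8).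
  { apply Rmult_le_reg_l with (d * d / 2); [nra|].
    rewrite <- Rmult_assoc. replace (d * d / 2 * / (2 * (d / 4) * d)) with 1 by (field; lra). lra. }
  assert (Hm : 2 * Kb / 2 * (F (x0 + d) - F (x0 - 2 * d)) >= 1 / 2) by lra.
  apply Rmult_le_reg_l with (2 * Kb); [lra|].
  replace (2 * Kb * (1 / (2 * Kb))) with 1 by (field; lra). lra.
Qed.

(** * Elementary geometry of 2x2 real matrices *)

Definition det2 (M : mat2) : R := m11 M * m22 M - m12 M * m21 M.
Definition frob2 (M : mat2) : R := m11 M ^ 2 + m12 M ^ 2 + m21 M ^ 2 + m22 M ^ 2.
Definition col1_sq (M : mat2) : R := m11 M ^ 2 + m21 M ^ 2.
Definition col2_sq (M : mat2) : R := m12 M ^ 2 + m22 M ^ 2.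

Definition proj_coef (M : mat2) : R := (m11 M * m12 M + m21 M * m22 M) / col2_sq M.

Lemma cauchy_schwarz2 (a b x y : R) : (a * x + b * y) ^ 2 <= (a ^ 2 + b ^ 2) * (x ^ 2 + y ^ 2).
Proof. assert (0 <= (a * y - b * x) ^ 2) by apply pow2_ge_0. nra. Qed.

Lemma frob2_nonneg (M : mat2) : 0 <= frob2 M.
Proof.
  unfold frob2. pose proof (pow2_ge_0 (m11 M)). pose proof (pow2_ge_0 (m12 M)).
  pose proof (pow2_ge_0 (m21 M)). pose proof (pow2_ge_0 (m22 M)). lra.
Qed.

Lemma det2_mul (A B : mat2) : det2 (mat2_mul A B) = det2 A * det2 B.
Proof. destruct A, B; unfold det2; simpl; ring. Qed.

Lemma opnorm_bounds (M : mat2) (r : R) : opnorm_is M r ->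
  col2_sq M <= r ^ 2 /\ r ^ 2 <= col1_sq M + col2_sq M.
Proof.
  destruct M as [a11 a12 a21 a22]. intros [Hub Hlub]. unfold col1_sq, col2_sq; cbn [m11 m12 m21 m22] in *.
  assert (Hcol2 := Hub (sqrt ((a11 * 0 + a12 * 1) ^ 2 + (a21 * 0 + a22 * 1) ^ 2))
     ltac:(exists 0, 1; split; [ring | reflexivity])).
  assert (Hr : 0 <= r) by (eapply Rle_trans; [apply sqrt_pos | exact Hcol2]).
  assert (Hfrob : 0 <= a11 ^ 2 + a21 ^ 2 + (a12 ^ 2 + a22 ^ 2)).
  { pose proof (pow2_ge_0 a11); pose proof (pow2_ge_0 a12).
    pose proof (pow2_ge_0 a21); pose proof (pow2_ge_0 a22). lra. }
  assert (Hup : r <= sqrt (a11 ^ 2 + a21 ^ 2 + (a12 ^ 2 + a22 ^ 2))).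
  { apply Hlub. intros t [v1 [v2 [Hv ->]]]. apply sqrt_le_1_alt.
    pose proof (cauchy_schwarz2 a11 a12 v1 v2). pose proof (cauchy_schwarz2 a21 a22 v1 v2).
    rewrite Hv in *. lra. }
  split.
  - replace (a12 ^ 2 + a22 ^ 2) with ((a11 * 0 + a12 * 1) ^ 2 + (a21 * 0 + a22 * 1) ^ 2) by ring.
    rewrite <- (sqrt_sqrt ((a11 * 0 + a12 * 1) ^ 2 + (a21 * 0 + a22 * 1) ^ 2))
      by (pose proof (pow2_ge_0 (a11 * 0 + a12 * 1)); pose proof (pow2_ge_0 (a21 * 0 + a22 * 1)); lra).
    replace (r ^ 2) with (r * r) by ring. apply Rmult_le_compat; auto using sqrt_pos.
  - rewrite <- (sqrt_sqrt (a11 ^ 2 + a21 ^ 2 + (a12 ^ 2 + a22 ^ 2))) by lra.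
    replace (r ^ 2) with (r * r) by ring. apply Rmult_le_compat; auto.
Qed.

(** Lagrange identity: for det M = 1 the first column is proj_coef M times the second
    column plus a vector orthogonal to it of length 1/|second column|. *)
Lemma col1_sq_decomposition (M : mat2) : det2 M = 1 -> 0 < col2_sq M ->
  col1_sq M = proj_coef M ^ 2 * col2_sq M + / col2_sq M.
Proof.
  destruct M as [f1 g1 f2 g2]. unfold proj_coef, det2, col1_sq, col2_sq; cbn [m11 m12 m21 m22].
  intros Hdet HG.
  replace (((f1 * g1 + f2 * g2) / (g1 ^ 2 + g2 ^ 2)) ^ 2 * (g1 ^ 2 + g2 ^ 2) + / (g1 ^ 2 + g2 ^ 2))
    with (((f1 * g1 + f2 * g2) ^ 2 + (f1 * g2 - g1 * f2) ^ 2) / (g1 ^ 2 + g2 ^ 2))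
    by (rewrite Hdet; field; lra).
  field; lra.
Qed.

Lemma proj_coef_step (A M : mat2) : det2 M = 1 -> 0 < col2_sq M -> 0 < col2_sq (mat2_mul A M) ->
  Rabs (proj_coef (mat2_mul A M) - proj_coef M) <= frob2 A / col2_sq (mat2_mul A M).
Proof.
  destruct A as [a11 a12 a21 a22], M as [f1 g1 f2 g2].
  unfold proj_coef, det2, col2_sq, frob2, mat2_mul; cbn [m11 m12 m21 m22].
  intros Hdet HG HG'.
  set (G := g1 ^ 2 + g2 ^ 2) in *.
  set (h1 := a11 * g1 + a12 * g2) in *. set (h2 := a21 * g1 + a22 * g2) in *.
  set (G' := h1 ^ 2 + h2 ^ 2) in *.
  set (u1 := a11 * g2 - a12 * g1). set (u2 := a21 * g2 - a22 * g1).
  assert (E1 : f1 = (f1 * g1 + f2 * g2) / G * g1 + g2 / G).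
  { replace (g2 / G) with (g2 * (f1 * g2 - g1 * f2) / G) by (rewrite Hdet; field; lra).
    unfold G in *; field; lra. }
  assert (E2 : f2 = (f1 * g1 + f2 * g2) / G * g2 - g1 / G).
  { replace (g1 / G) with (g1 * (f1 * g2 - g1 * f2) / G) by (rewrite Hdet; field; lra).
    unfold G in *; field; lra. }
  set (r := (f1 * g1 + f2 * g2) / G) in *.
  assert (ID : ((a11 * f1 + a12 * f2) * h1 + (a21 * f1 + a22 * f2) * h2) / G' - r
               = (u1 * h1 + u2 * h2) / (G * G')).
  { rewrite E1, E2. unfold u1, u2, G', h1, h2. field. split; apply Rgt_not_eq; assumption. }
  rewrite ID. clear ID E1 E2.
  set (Fr := a11 ^ 2 + a12 ^ 2 + a21 ^ 2 + a22 ^ 2).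
  assert (B1 : u1 ^ 2 + u2 ^ 2 <= Fr * G).
  { unfold u1, u2, G, Fr. pose proof (cauchy_schwarz2 a11 (- a12) g2 g1).
    pose proof (cauchy_schwarz2 a21 (- a22) g2 g1). nra. }
  assert (B2 : h1 ^ 2 + h2 ^ 2 <= Fr * G).
  { unfold h1, h2, G, Fr. pose proof (cauchy_schwarz2 a11 a12 g1 g2).
    pose proof (cauchy_schwarz2 a21 a22 g1 g2). nra. }
  assert (B3 : 2 * Rabs (u1 * h1 + u2 * h2) <= u1 ^ 2 + u2 ^ 2 + h1 ^ 2 + h2 ^ 2).
  { pose proof (pow2_ge_0 (u1 - h1)); pose proof (pow2_ge_0 (u2 - h2));
    pose proof (pow2_ge_0 (u1 + h1)); pose proof (pow2_ge_0 (u2 + h2));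
    unfold Rabs; destruct Rcase_abs; nra. }
  unfold Rdiv at 1. rewrite Rabs_mult, Rabs_inv, (Rabs_right (G * G')) by nra.
  apply Rmult_le_reg_r with (G * G'); [nra|].
  replace (Rabs (u1 * h1 + u2 * h2) * / (G * G') * (G * G')) with (Rabs (u1 * h1 + u2 * h2))
    by (field; lra).
  replace (Fr / G' * (G * G')) with (Fr * G) by (field; lra).
  lra.
Qed.

(** * A decaying solution of a uniformly bounded SL(2,R) cocycle *)

Lemma geometric_tail (r : nat -> R) (K q : R) (N : nat) :
  0 < q < 1 -> 0 <= K -> (forall n, (n >= N)%nat -> Rabs (r (S n) - r n) <= K * q ^ n) ->
  Un_cv r 0 -> forall n, (n >= N)%nat -> Rabs (r n) <= K * q ^ n / (1 - q).
Proof.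
  intros Hq HK Hs Hcv n Hn.
  assert (Hk : forall k, Rabs (r n - r (n + k)%nat) <= K * q ^ n * (1 - q ^ k) / (1 - q)).
  { induction k.
    - rewrite Nat.add_0_r, Rminus_diag, Rabs_R0. simpl. right; field; lra.
    - rewrite Nat.add_succ_r.
      specialize (Hs (n + k)%nat ltac:(lia)). rewrite pow_add in Hs.
      replace (r n - r (S (n + k))) with ((r n - r (n + k)%nat) - (r (S (n + k)) - r (n + k)%nat)) by ring.
      eapply Rle_trans; [apply Rabs_triang|]. rewrite Rabs_Ropp.
      replace (K * q ^ n * (1 - q ^ S k) / (1 - q))
        with (K * q ^ n * (1 - q ^ k) / (1 - q) + K * (q ^ n * q ^ k)) by (simpl; field; lra).
      lra. }
  apply Rle_plus_epsilon. intros eps He.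
  destruct (Hcv eps He) as [M HM].
  specialize (Hk M). specialize (HM (n + M)%nat ltac:(lia)).
  unfold Rdist in HM; rewrite Rminus_0_r in HM.
  replace (r n) with ((r n - r (n + M)%nat) + r (n + M)%nat) by ring.
  eapply Rle_trans; [apply Rabs_triang|].
  assert (K * q ^ n * (1 - q ^ M) / (1 - q) <= K * q ^ n / (1 - q)).
  { unfold Rdiv. apply Rmult_le_compat_r; [left; apply Rinv_0_lt_compat; lra|].
    assert (0 < q ^ M) by (apply pow_lt; lra).
    assert (0 <= K * q ^ n) by (apply Rmult_le_pos; [auto | left; apply pow_lt; lra]).
    nra. }
  lra.
Qed.

Lemma proj_coef_sq_bound (M : mat2) (C X : R) :
  det2 M = 1 -> 1 <= X -> X ^ 3 / 2 <= col2_sq M -> col1_sq M <= C * X ^ 2 ->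
  proj_coef M ^ 2 <= 2 * C / X.
Proof.
  intros Hdet HX HG Hf.
  assert (HX3 : 1 <= X ^ 3) by (apply pow_R1_Rle; lra).
  assert (HGpos : 0 < col2_sq M) by lra.
  assert (Hdec := col1_sq_decomposition M Hdet HGpos).
  assert (0 < / col2_sq M) by (apply Rinv_0_lt_compat; auto).
  assert (Hr : proj_coef M ^ 2 * col2_sq M <= C * X ^ 2) by lra.
  apply Rmult_le_reg_r with (col2_sq M); auto.
  apply Rle_trans with (C * X ^ 2); auto.
  assert (0 <= C) by (pose proof (pow2_ge_0 (proj_coef M)); nra).
  apply Rle_trans with (2 * C / X * (X ^ 3 / 2)).
  - right. field. lra.
  - apply Rmult_le_compat_l; auto. apply Rle_mult_inv_pos; lra.
Qed.

(** Conversely a small projection coefficient and a large second column force a small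
    first column, by the Lagrange identity. *)
Lemma col1_sq_bound (M : mat2) (K X : R) :
  det2 M = 1 -> 1 <= X -> X ^ 3 / 2 <= col2_sq M <= X ^ 5 -> Rabs (proj_coef M) <= K / X ^ 3 ->
  col1_sq M <= (K ^ 2 + 2) / X.
Proof.
  intros Hdet HX [HG1 HG2] Hr.
  assert (HX3 : 1 <= X ^ 3) by (apply pow_R1_Rle; lra).
  assert (HGpos : 0 < col2_sq M) by lra.
  rewrite (col1_sq_decomposition M Hdet HGpos).
  assert (Hr2 : proj_coef M ^ 2 <= (K / X ^ 3) ^ 2).
  { rewrite <- (pow2_abs (proj_coef M)). apply pow_incr; split; [apply Rabs_pos | auto]. }
  assert (A1 : proj_coef M ^ 2 * col2_sq M <= K ^ 2 / X).
  { replace (K ^ 2 / X) with ((K / X ^ 3) ^ 2 * X ^ 5) by (field; lra).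
    apply Rmult_le_compat; auto using pow2_ge_0; lra. }
  assert (A2 : / col2_sq M <= 2 / X).
  { apply Rle_trans with (/ (X ^ 3 / 2)); [apply Rinv_le_contravar; lra|].
    replace (/ (X ^ 3 / 2)) with (2 / X ^ 3) by (field; lra).
    unfold Rdiv. apply Rmult_le_compat_l; [lra|]. apply Rinv_le_contravar; [lra|].
    replace (X ^ 3) with (X * X * X) by ring. nra. }
  replace ((K ^ 2 + 2) / X) with (K ^ 2 / X + 2 / X) by (field; lra). lra.
Qed.

(** If eventually the second
    column of T_n has size between P^{3n/2}/sqrt 2 and P^{5n/2} while the first column is at
    most of size P^n, then the first column actually decays like P^{-n/2}: the projection
    coefficient converges geometrically fast (to 0), which forces the first column to be
    almost orthogonal to the fast-growing second one. *)
Lemma first_column_decay (T A : nat -> mat2) (B P C : R) (N : nat) :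
  (forall n, T (S n) = mat2_mul (A (S n)) (T n)) ->
  (forall n, det2 (T n) = 1) ->
  (forall n, frob2 (A (S n)) <= B) -> 1 < P ->
  (forall n, (n >= N)%nat -> (P ^ n) ^ 3 / 2 <= col2_sq (T n) <= (P ^ n) ^ 5) ->
  (forall n, (n >= N)%nat -> col1_sq (T n) <= C * (P ^ n) ^ 2) ->
  exists D, forall n, (n >= N)%nat -> col1_sq (T n) <= D / P ^ n.
Proof.
  intros HT Hdet HA HP HG Hf.
  set (r := fun n => proj_coef (T n)).
  assert (HX : forall n, 1 <= P ^ n) by (intros; apply pow_R1_Rle; lra).
  assert (HGpos : forall n, (n >= N)%nat -> 0 < col2_sq (T n)).
  { intros n Hn. specialize (HG n Hn). assert (1 <= (P ^ n) ^ 3) by (apply pow_R1_Rle, HX). lra. }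
  assert (HB : 0 <= B) by (eapply Rle_trans; [apply frob2_nonneg | apply (HA 0%nat)]).
  assert (HP3 : 0 < / P ^ 3 < 1).
  { assert (1 < P ^ 3) by (simpl; nra). split; [apply Rinv_0_lt_compat; lra|].
    rewrite <- Rinv_1. apply Rinv_lt_contravar; lra. }
  assert (Hstep : forall n, (n >= N)%nat -> Rabs (r (S n) - r n) <= 2 * B * (/ P ^ 3) ^ n).
  { intros n Hn. unfold r. rewrite HT.
    eapply Rle_trans; [apply proj_coef_step; auto; rewrite <- HT; apply HGpos; lia|].
    rewrite <- HT, pow_inv, <- pow_mult, Nat.mul_comm, pow_mult.
    destruct (HG (S n) ltac:(lia)) as [HGS _].
    assert ((P ^ n) ^ 3 <= (P ^ S n) ^ 3).
    { apply pow_incr; split; [specialize (HX n); lra|]. apply Rle_pow; [lra | lia]. }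
    assert (1 <= (P ^ n) ^ 3) by (apply pow_R1_Rle, HX).
    apply Rle_trans with (B / ((P ^ n) ^ 3 / 2)).
    - unfold Rdiv. apply Rmult_le_compat; auto using frob2_nonneg.
      + left; apply Rinv_0_lt_compat, HGpos; lia.
      + apply Rinv_le_contravar; lra.
    - right; field. specialize (HX n); lra. }
  assert (Hcv : Un_cv r 0).
  { assert (HC : 0 <= C).
    { specialize (Hf N (le_n _)). unfold col1_sq in Hf.
      pose proof (pow2_ge_0 (m11 (T N))); pose proof (pow2_ge_0 (m21 (T N))).
      assert (0 < (P ^ N) ^ 2) by (apply pow_lt; specialize (HX N); lra). nra. }
    apply (cv_0_of_sq_geometric r (2 * C) (/ P) N); [lra | |].
    - split; [apply Rinv_0_lt_compat; lra|]. rewrite <- Rinv_1. apply Rinv_lt_contravar; lra.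
    - intros n Hn. rewrite pow_inv. apply (proj_coef_sq_bound (T n)); auto; apply HG; auto. }
  set (K := 2 * B / (1 - / P ^ 3)).
  exists (K ^ 2 + 2). intros n Hn.
  apply col1_sq_bound; auto.
  eapply Rle_trans; [apply (geometric_tail r (2 * B) (/ P ^ 3) N); auto; lra|].
  right. rewrite pow_inv, <- pow_mult, Nat.mul_comm, pow_mult. unfold K. field.
  specialize (HX n). split; [lra|]. split; [simpl; nra | lra].
Qed.

(** * Growth of sequences *)

Lemma subexponential_of_ratio (K q : nat -> R) (Q : R) :
  (forall n, K (S n) = K n + q (S n)) -> (forall n, 0 < K n) ->
  Un_cv (fun n => q n / K n) 0 -> 1 < Q ->
  exists N C, forall n, (n >= N)%nat -> K n <= C * Q ^ n.
Proof.
  intros HK Hpos Hcv HQ.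
  assert (HQinv : 0 < / Q < 1).
  { split; [apply Rinv_0_lt_compat; lra|]. rewrite <- Rinv_1. apply Rinv_lt_contravar; lra. }
  destruct (Hcv (1 - / Q)) as [N HN]; [lra|].
  assert (Hstep : forall n, (n >= N)%nat -> K (S n) <= Q * K n).
  { intros n Hn. specialize (HN (S n) ltac:(lia)). specialize (Hpos (S n)).
    unfold Rdist in HN. rewrite Rminus_0_r in HN. apply Rabs_def2 in HN.
    assert (Hq : q (S n) < (1 - / Q) * K (S n)).
    { apply Rmult_lt_reg_r with (/ K (S n)); [apply Rinv_0_lt_compat; lra|].
      replace ((1 - / Q) * K (S n) * / K (S n)) with (1 - / Q) by (field; lra). apply HN. }
    rewrite HK in Hq |- *.
    apply Rmult_le_reg_l with (/ Q); [lra|].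
    replace (/ Q * (Q * K n)) with (K n) by (field; lra). nra. }
  exists N, (K N / Q ^ N). intros n Hn.
  replace n with (N + (n - N))%nat by lia. generalize (n - N)%nat; intros k.
  assert (HQN : 0 < Q ^ N) by (apply pow_lt; lra).
  replace (K N / Q ^ N * Q ^ (N + k)) with (K N * Q ^ k) by (rewrite pow_add; field; lra).
  induction k.
  - rewrite Nat.add_0_r; simpl; lra.
  - rewrite Nat.add_succ_r. eapply Rle_trans; [apply Hstep; lia|].
    simpl. specialize (Hpos N). nra.
Qed.

Lemma bounded_of_geometric_increments (K q : nat -> R) (D u : R) (N : nat) :
  (forall n, K (S n) = K n + q (S n)) -> (forall n, 0 <= q n) -> 0 <= D -> 0 < u < 1 ->
  (forall n, (n >= N)%nat -> q n <= D * u ^ n) ->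
  forall n, K n <= K N + D / (1 - u).
Proof.
  intros HK Hq HD Hu Hgeo n.
  assert (HDu : 0 <= D / (1 - u)) by (apply Rle_mult_inv_pos; lra).
  assert (Hpow : forall j, 0 < u ^ j <= 1).
  { induction j; simpl; [lra|]. nra. }
  destruct (Nat.le_gt_cases n N) as [Hle|Hgt].
  - assert (Hmono : forall k, K n <= K (n + k)%nat).
    { induction k; [rewrite Nat.add_0_r; lra|]. rewrite Nat.add_succ_r, HK. specialize (Hq (S (n + k))). lra. }
    replace N with (n + (N - n))%nat by lia. specialize (Hmono (N - n)%nat). lra.
  - replace n with (N + (n - N))%nat by lia. generalize (n - N)%nat; intros k.
    apply Rle_trans with (K N + D * (1 - u ^ k) / (1 - u)).
    + induction k.
      * rewrite Nat.add_0_r. simpl. right; field; lra.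
      * rewrite Nat.add_succ_r, HK. specialize (Hgeo (S (N + k)) ltac:(lia)).
        assert (Hsh : u ^ S (N + k) <= u ^ k).
        { replace (S (N + k)) with (k + S N)%nat by lia. rewrite pow_add.
          pose proof (Hpow k). pose proof (Hpow (S N)). nra. }
        replace (K N + D * (1 - u ^ S k) / (1 - u)) with (K N + D * (1 - u ^ k) / (1 - u) + D * u ^ k)
          by (simpl; field; lra).
        nra.
    + apply Rplus_le_compat_l. unfold Rdiv. apply Rmult_le_compat_r; [left; apply Rinv_0_lt_compat; lra|].
      specialize (Hpow k). nra.
Qed.

Lemma boundary_terms_small (alpha s : nat -> R) (M D u : R) (N : nat) :
  0 <= D -> 0 < u < 1 -> (forall n, 0 <= s n) ->
  (forall n, (n >= N)%nat -> s n <= D * u ^ n) -> (forall n, alpha (S n) ^ 2 <= M ^ 2) ->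
  forall eta, 0 < eta -> exists n, alpha (S n) ^ 2 * (s n + s (S n)) <= eta.
Proof.
  intros HD Hu Hs Hgeo Halpha eta Heta.
  set (L := 2 * M ^ 2 * D + 1).
  assert (HL : 0 < L) by (unfold L; pose proof (pow2_ge_0 M); nra).
  destruct (pow_lt_1_zero u ltac:(rewrite Rabs_right; lra) (eta / L) ltac:(apply Rdiv_lt_0_compat; lra))
    as [N' HN'].
  set (n := max N N'). exists n.
  specialize (HN' n ltac:(unfold n; lia)). rewrite Rabs_right in HN' by (left; apply pow_lt; lra).
  assert (Hun : 0 < u ^ n) by (apply pow_lt; lra).
  assert (Hsum : s n + s (S n) <= 2 * D * u ^ n).
  { pose proof (Hgeo n ltac:(unfold n; lia)). pose proof (Hgeo (S n) ltac:(unfold n; lia)).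
    assert (D * (u * u ^ n) <= D * u ^ n) by (apply Rmult_le_compat_l; nra).
    simpl pow in *. lra. }
  assert (Hlt : L * u ^ n < eta).
  { apply Rmult_lt_reg_l with (/ L); [apply Rinv_0_lt_compat; lra|].
    replace (/ L * (L * u ^ n)) with (u ^ n) by (field; lra). unfold Rdiv in HN'; lra. }
  specialize (Halpha n). pose proof (pow2_ge_0 (alpha (S n))). pose proof (Hs n). pose proof (Hs (S n)).
  unfold L in Hlt. nra.
Qed.

Lemma exp_mult_INR (x : R) (n : nat) : exp (x * INR n) = exp x ^ n.
Proof.
  induction n.
  - simpl. rewrite Rmult_0_r, exp_0. reflexivity.
  - rewrite S_INR, Rmult_plus_distr_l, exp_plus, IHn, Rmult_1_r. simpl. ring.
Qed.

Lemma exp_le_compat (x y : R) : x <= y -> exp x <= exp y.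
Proof. intros [H|H]; [left; apply exp_increasing; auto | subst; lra]. Qed.

Lemma lyapunov_growth (nrm : nat -> R) (g : R) :
  0 < g -> Un_cv (fun n => ln (nrm n) / INR n) g ->
  exists N, forall n, (n >= N)%nat ->
    (exp (g / 2) ^ n) ^ 3 <= nrm n ^ 2 <= (exp (g / 2) ^ n) ^ 5.
Proof.
  intros Hg Hcv. destruct (Hcv (g / 4)) as [N HN]; [lra|].
  exists (max N 1). intros n Hn. specialize (HN n ltac:(lia)).
  unfold Rdist in HN. apply Rabs_def2 in HN.
  assert (Hn0 : 0 < INR n) by (apply lt_0_INR; lia).
  assert (L1 : 3 * g / 4 * INR n <= ln (nrm n)).
  { apply Rmult_le_reg_r with (/ INR n); [apply Rinv_0_lt_compat; lra|].
    replace (3 * g / 4 * INR n * / INR n) with (3 * g / 4) by (field; lra). unfold Rdiv in HN. lra. }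
  assert (L2 : ln (nrm n) <= 5 * g / 4 * INR n).
  { apply Rmult_le_reg_r with (/ INR n); [apply Rinv_0_lt_compat; lra|].
    replace (5 * g / 4 * INR n * / INR n) with (5 * g / 4) by (field; lra). unfold Rdiv in HN. lra. }
  assert (Hpos : 0 < nrm n).
  { unfold ln in L1. destruct (Rlt_dec 0 (nrm n)); [auto | nra]. }
  rewrite <- (exp_ln (nrm n)) by auto.
  rewrite <- !exp_mult_INR. simpl INR.
  split; apply exp_le_compat; lra.
Qed.

(** * The transfer matrices at x0 *)

Lemma kernel_succ (c : nat -> nat -> R) (n : nat) (y : R) :
  CD_kernel c (S n) y y = CD_kernel c n y y + poly_eval c (S n) y ^ 2.
Proof. unfold CD_kernel; simpl; ring. Qed.

Lemma kernel_mono (c : nat -> nat -> R) (n k : nat) (y : R) :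
  CD_kernel c n y y <= CD_kernel c (n + k) y y.
Proof.
  induction k; [rewrite Nat.add_0_r; lra|].
  rewrite Nat.add_succ_r, kernel_succ. pose proof (pow2_ge_0 (poly_eval c (S (n + k)) y)). lra.
Qed.

Lemma det2_A_mat (ja jb : nat -> R) (j : nat) (x0 : R) : ja j <> 0 -> det2 (A_mat ja jb j x0) = 1.
Proof. intros Ha; unfold det2, A_mat; simpl; field; auto. Qed.

Lemma frob2_A_mat (ja jb : nat -> R) (j : nat) (x0 a b m M : R) :
  0 < m -> m <= ja j <= M -> a <= jb j <= b ->
  frob2 (A_mat ja jb j x0) <= ((Rabs x0 + Rabs a + Rabs b) ^ 2 + 1) / m ^ 2 + M ^ 2.
Proof.
  intros Hm Ha Hb. unfold frob2, A_mat; cbn [m11 m12 m21 m22].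
  replace (((x0 - jb j) / ja j) ^ 2 + (- 1 / ja j) ^ 2 + (ja j ^ 2 / ja j) ^ 2 + 0 ^ 2)
    with (((x0 - jb j) ^ 2 + 1) / ja j ^ 2 + ja j ^ 2) by (field; lra).
  assert (H1 : (x0 - jb j) ^ 2 <= (Rabs x0 + Rabs a + Rabs b) ^ 2).
  { rewrite <- (pow2_abs (x0 - jb j)). apply pow_incr. split; [apply Rabs_pos|].
    unfold Rminus. eapply Rle_trans; [apply Rabs_triang|]. rewrite Rabs_Ropp.
    assert (Rabs (jb j) <= Rabs a + Rabs b) by (unfold Rabs; repeat destruct Rcase_abs; lra). lra. }
  assert (H2 : ja j ^ 2 <= M ^ 2) by (apply pow_incr; lra).
  assert (H3 : m ^ 2 <= ja j ^ 2) by (apply pow_incr; lra).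
  assert (0 < m ^ 2) by (apply pow_lt; lra).
  assert (((x0 - jb j) ^ 2 + 1) / ja j ^ 2 <= ((Rabs x0 + Rabs a + Rabs b) ^ 2 + 1) / m ^ 2).
  { unfold Rdiv. apply Rmult_le_compat; try lra.
    - pose proof (pow2_ge_0 (x0 - jb j)); lra.
    - left; apply Rinv_0_lt_compat; lra.
    - apply Rinv_le_contravar; lra. }
  lra.
Qed.

Section Transfer.
Variables (F : R -> R) (a b : R) (c : nat -> nat -> R) (ja jb : nat -> R) (x0 : R).
Hypothesis Hp : orthonormal_polys F a b c.
Hypothesis Hjac : jacobi_params c ja jb.
Notation p := (poly_eval c).

Lemma transfer_det (n : nat) : det2 (transfer ja jb n x0) = 1.
Proof.
  induction n; [unfold det2; simpl; ring|].
  simpl transfer. rewrite det2_mul, IHn, det2_A_mat; [ring|].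
  destruct Hjac as [Hpos _]. specialize (Hpos (S n) ltac:(lia)). lra.
Qed.

Lemma transfer_first_column (n : nat) :
  m11 (transfer ja jb n x0) = p n x0 /\ m21 (transfer ja jb n x0) = match n with O => 0 | S k => ja n * p k x0 end.
Proof.
  destruct Hjac as [Hpos _].
  induction n.
  - simpl. rewrite (p_zero F a b c Hp). auto.
  - destruct IHn as [H1 H2]. simpl transfer. cbn [m11 m12 m21 m22 mat2_mul A_mat]. rewrite H1, H2.
    assert (Ha : 0 < ja (S n)) by (apply Hpos; lia).
    pose proof (three_term c ja jb Hjac n x0) as Hr.
    split; [|field; lra].
    apply Rmult_eq_reg_l with (ja (S n)); [|lra].
    replace (ja (S n) * ((x0 - jb (S n)) / ja (S n) * p n x0
               + - 1 / ja (S n) * (match n with O => 0 | S k => ja n * p k x0 end)))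
      with ((x0 - jb (S n)) * p n x0 - (match n with O => 0 | S k => ja n * p k x0 end)) by (field; lra).
    lra.
Qed.

Lemma kernel_ge_one (n : nat) : 1 <= CD_kernel c n x0 x0.
Proof.
  pose proof (kernel_mono c 0 n x0). unfold CD_kernel at 1 in H; simpl in H.
  rewrite (p_zero F a b c Hp) in H. lra.
Qed.

Lemma transfer_col1_bound (M : R) : (forall n, (1 <= n)%nat -> ja n <= M) ->
  forall n, col1_sq (transfer ja jb n x0) <= (1 + M ^ 2) * CD_kernel c n x0 x0.
Proof.
  intros HM n. destruct (transfer_first_column n) as [E1 E2]. unfold col1_sq. rewrite E1, E2.
  destruct Hjac as [Hpos _].
  assert (HK := kernel_ge_one n). pose proof (pow2_ge_0 M).
  destruct n as [|n].
  - unfold CD_kernel in *; simpl in *. rewrite (p_zero F a b c Hp) in *. nra.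
  - rewrite kernel_succ in *.
    assert (Ha : 0 < ja (S n) <= M) by (split; [apply Hpos | apply HM]; lia).
    assert (Hpn : p n x0 ^ 2 <= CD_kernel c n x0 x0).
    { destruct n; [unfold CD_kernel; simpl; nra|]. rewrite kernel_succ. pose proof (kernel_ge_one n). lra. }
    assert (ja (S n) ^ 2 <= M ^ 2) by (apply pow_incr; lra).
    pose proof (pow2_ge_0 (p n x0)). pose proof (pow2_ge_0 (p (S n) x0)).
    replace ((ja (S n) * p n x0) ^ 2) with (ja (S n) ^ 2 * p n x0 ^ 2) by ring.
    nra.
Qed.

End Transfer.

(** * From a vanishing ratio p_n^2 / K_n to exponential decay of p_n(x0) *)

(** When ||M||^2 is between X^3 and X^5 and the first column is much shorter, the
    second column carries the growth (since ||M||^2 <= |col1|^2 + |col2|^2). *)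
Lemma second_column_growth (M : mat2) (r C X : R) :
  opnorm_is M r -> X ^ 3 <= r ^ 2 <= X ^ 5 -> col1_sq M <= C * X ^ 2 -> 2 * C <= X ->
  X ^ 3 / 2 <= col2_sq M <= X ^ 5.
Proof.
  intros Hr [L1 L2] Hf HX. destruct (opnorm_bounds M r Hr) as [O1 O2].
  assert (C * X ^ 2 <= X ^ 3 / 2) by (pose proof (pow2_ge_0 X); simpl; nra).
  lra.
Qed.

(** If p_n(x0)^2 / K_n(x0,x0) -> 0, the first column of T_n(x0) grows subexponentially,
    while by positivity of the Lyapunov exponent ||T_n(x0)|| grows exponentially; the
    second column then carries the growth, and the first column decays exponentially. *)
Lemma geometric_decay_of_vanishing_ratio (F : R -> R) (a b : R) (c : nat -> nat -> R)
  (ja jb : nat -> R) (x0 : R) :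
  compact_prob_distr F a b -> orthonormal_polys F a b c -> jacobi_params c ja jb ->
  (exists m M, 0 < m /\ forall n, (1 <= n)%nat -> m <= ja n <= M) ->
  (exists g, 0 < g /\ lyapunov_exponent_is ja jb x0 g) ->
  Un_cv (fun n => poly_eval c n x0 ^ 2 / CD_kernel c n x0 x0) 0 ->
  exists D u N, 0 <= D /\ 0 < u < 1 /\
    forall n, (n >= N)%nat -> poly_eval c n x0 ^ 2 <= D * u ^ n.
Proof.
  intros Hrho Hp Hjac [m [M [Hm HmM]]] [g [Hg [nrm [Hnrm Hly]]]] Hcv.
  set (P := exp (g / 2)).
  assert (HP : 1 < P) by (unfold P; rewrite <- exp_0; apply exp_increasing; lra).
  destruct (subexponential_of_ratio (fun n => CD_kernel c n x0 x0) (fun n => poly_eval c n x0 ^ 2)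
              (P ^ 2) (fun n => kernel_succ c n x0)
              (fun n => Rlt_le_trans _ _ _ Rlt_0_1 (kernel_ge_one F a b c x0 Hp n))
              Hcv ltac:(simpl; nra)) as [N1 [C HC]].
  destruct (lyapunov_growth nrm g Hg Hly) as [N2 HN2].
  set (C1 := (1 + M ^ 2) * C).
  destruct (Pow_x_infinity P ltac:(rewrite Rabs_right; lra) (2 * C1)) as [N3 HN3].
  set (Nb := max (max N1 N2) N3).
  assert (Hcol1 : forall n, (n >= Nb)%nat -> col1_sq (transfer ja jb n x0) <= C1 * (P ^ n) ^ 2).
  { intros n Hn. eapply Rle_trans; [apply (transfer_col1_bound F a b c ja jb x0 Hp Hjac M)|].
    - intros k Hk; apply HmM; auto.
    - unfold C1. rewrite Rmult_assoc, <- pow_mult, Nat.mul_comm, pow_mult.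
      apply Rmult_le_compat_l; [pose proof (pow2_ge_0 M); lra | apply HC; lia]. }
  assert (Hgrowth : forall n, (n >= Nb)%nat ->
            (P ^ n) ^ 3 / 2 <= col2_sq (transfer ja jb n x0) <= (P ^ n) ^ 5).
  { intros n Hn. apply (second_column_growth _ (nrm n) C1); auto; [apply HN2; lia|].
    specialize (HN3 n ltac:(lia)). rewrite Rabs_right in HN3 by (left; apply pow_lt; lra). lra. }
  set (B := ((Rabs x0 + Rabs a + Rabs b) ^ 2 + 1) / m ^ 2 + M ^ 2).
  assert (Hfrob : forall n, frob2 (A_mat ja jb (S n) x0) <= B).
  { intros n. apply frob2_A_mat; [lra | apply HmM; lia | apply (jb_bounds F a b c ja jb Hp Hjac Hrho)]. }
  destruct (first_column_decay (fun n => transfer ja jb n x0) (fun j => A_mat ja jb j x0) B P C1 Nb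
              (fun n => eq_refl) (transfer_det c ja jb x0 Hjac) Hfrob HP Hgrowth Hcol1) as [D HD].
  assert (Hp_col1 : forall n, poly_eval c n x0 ^ 2 <= col1_sq (transfer ja jb n x0)).
  { intros n. unfold col1_sq. rewrite (proj1 (transfer_first_column F a b c ja jb x0 Hp Hjac n)).
    pose proof (pow2_ge_0 (m21 (transfer ja jb n x0))). lra. }
  exists D, (/ P), Nb. repeat split.
  - specialize (HD Nb (le_n _)). pose proof (pow2_ge_0 (poly_eval c Nb x0)).
    specialize (Hp_col1 Nb). assert (HPN : 0 < P ^ Nb) by (apply pow_lt; lra).
    apply Rmult_le_reg_r with (/ P ^ Nb); [apply Rinv_0_lt_compat; lra|]. rewrite Rmult_0_l. lra.
  - apply Rinv_0_lt_compat; lra.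
  - rewrite <- Rinv_1. apply Rinv_lt_contravar; lra.
  - intros n Hn. rewrite pow_inv. eapply Rle_trans; [apply Hp_col1 | apply HD; auto].
Qed.

(** Exponential decay of p_n(x0) makes K_n(x0,x0) bounded and the boundary terms
    a_{n+1}^2 (p_n(x0)^2 + p_{n+1}(x0)^2) small, so x0 is a pure point. *)
Lemma pure_point_of_geometric_decay (F : R -> R) (a b : R) (c : nat -> nat -> R)
  (ja jb : nat -> R) (x0 M D u : R) (N : nat) :
  compact_prob_distr F a b -> orthonormal_polys F a b c -> jacobi_params c ja jb ->
  (forall n, (1 <= n)%nat -> ja n <= M) -> 0 <= D -> 0 < u < 1 ->
  (forall n, (n >= N)%nat -> poly_eval c n x0 ^ 2 <= D * u ^ n) ->
  pure_point F x0.
Proof.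
  intros Hrho Hp Hjac HM HD Hu Hdecay.
  apply (pure_point_of_bounded_kernel F a b c ja jb x0 (CD_kernel c N x0 x0 + D / (1 - u)) Hrho Hp Hjac).
  - apply (bounded_of_geometric_increments (fun n => CD_kernel c n x0 x0) (fun n => poly_eval c n x0 ^ 2));
      auto using kernel_succ, pow2_ge_0.
  - apply (boundary_terms_small ja (fun n => poly_eval c n x0 ^ 2) M D u N); auto using pow2_ge_0.
    intros n. destruct Hjac as [Hpos _].
    assert (Ha : 0 < ja (S n) <= M) by (split; [apply Hpos | apply HM]; lia).
    apply pow_incr; lra.
Qed.

Theorem corollary3p3
  (F : R -> R) (a b : R) (c : nat -> nat -> R) (ja jb : nat -> R) (x0 : R)
  (Hrho : compact_prob_distr F a b)
  (Hinf : infinite_support F)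
  (Hp : orthonormal_polys F a b c)
  (Hjac : jacobi_params c ja jb)
  (Hbnd : exists m M, 0 < m /\ forall n, (1 <= n)%nat -> m <= ja n <= M)
  (Hlyap : exists g, 0 < g /\ lyapunov_exponent_is ja jb x0 g) :
  pure_point F x0 \/
  ~ Un_cv (fun n => poly_eval c n x0 ^ 2 / CD_kernel c n x0 x0) 0.
Proof.
  destruct (classic (Un_cv (fun n => poly_eval c n x0 ^ 2 / CD_kernel c n x0 x0) 0)) as [Hcv|Hcv];
    [left | right; exact Hcv].
  destruct (geometric_decay_of_vanishing_ratio F a b c ja jb x0 Hrho Hp Hjac Hbnd Hlyap Hcv)
    as [D [u [N [HD [Hu Hdecay]]]]].
  destruct Hbnd as [m [M [_ HmM]]].
  apply (pure_point_of_geometric_decay F a b c ja jb x0 M D u N); auto.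
  intros n Hn; apply HmM; auto.
Qed.
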